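(* Let $G=(P,E)$ be a finite, connected, undirected, simple graph on the vertex set $P=\{1,\dots,n\}$ with $n\ge 2$, and let $W$ be a finite totally ordered set of $p$ words. Consider the automata network with confusion parameter $\epsilon=0$ described in the context, started from any initial configuration of the form $(M_u,x_u)=(\{x_u\},x_u)$ with $x_u\in W$ for every $u\in P$, and run under the sequential updating scheme given by any fixed permutation of $P$. Then the system reaches a fixed point within $\mathcal{O}(n^2p)$ time steps. That is, there is an absolute constant $C$ such that for every such $G$, $W$, initial configuration and permutation, after at most $Cn^2p$ steps the configuration is invariant under the local rule of every vertex.
   Context: Model. Each vertex $u\in P$ (an individual) has a state $(M_u,x_u)$, where the memory $M_u$ is a subset of $W$ and $x_u\in M_u$ is the word $u$ conveys to its neighbours. The neighbourhood of $u$ is $V_u=\{v\in P:(u,v)\in E\}$. The total order on $W$ is written $\prec$, and $\min$ refers to it. Local rule of $u$ for confusion parameter $\epsilon=0$. When $u$ is updated, it first forms $N_u=\{x_v : v\in V_u,\ x_v\notin M_u\}$ and $B_u=\{x_v : v\in V_u,\ x_v\in M_u\}$. If $N_u\neq\emptyset$, the memory becomes $M_u\cup N_u$ and $x_u$ is unchanged (addition). Otherwise the state becomes $(\{\min B_u\},\min B_u)$ (collapse). All other vertices keep their states. Updating schemes. One vertex is updated per time step. Under the sequential scheme, a fixed permutation $\sigma$ of $P$ is chosen and vertices are updated cyclically in the order $\sigma(1),\dots,\sigma(n),\sigma(1),\dots$, with each update using the current states. Under the fully-asynchronous scheme, at each time step one vertex is chosen uniformly at random from $P$, independently of all other steps.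 A fixed point is a configuration that is left unchanged by the local rule of every vertex. *)

From HB Require Import structures.
From mathcomp Require Import all_boot all_order all_fingroup.
Set Implicit Arguments. Unset Strict Implicit. Unset Printing Implicit Defensive.
Import Order.TTheory.
Local Open Scope order_scope.

Section Model.
Variables (d : Order.disp_t) (W : finOrderType d) (P : finType).

(* state of a vertex: (memory M_u, conveyed word x_u) *)
Definition state := ({set W} * W)%type.
Definition config := P -> state.

(* minimum of a finite set of words w.r.t. the total order of W;
   the default [dflt] is only used when the set is empty *)
Definition set_min (dflt : W) (B : {set W}) : W :=
  match enum B with
  | [::] => dflt
  | h :: t => foldr Order.min h t
  end.

Variable e : rel P.

Definition Nset (c : config) (u : P) : {set W} :=
  [set w | [exists v, [&& e u v, (c v).2 == w & w \notin (c u).1]]].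
Definition Bset (c : config) (u : P) : {set W} :=
  [set w | [exists v, [&& e u v, (c v).2 == w & w \in (c u).1]]].

(* local rule of u, confusion parameter epsilon = 0 *)
Definition local_rule (c : config) (u : P) : state :=
  if Nset c u != set0 then ((c u).1 :|: Nset c u, (c u).2)
  else let m := set_min (c u).2 (Bset c u) in ([set m], m).

Definition update (c : config) (u : P) : config :=
  fun v => if v == u then local_rule c u else c v.

(* vertex updated at time step t (t = 0,1,...) under the sequential scheme
   sigma(1),...,sigma(n),sigma(1),...: it is sigma of the (t mod n)-th vertex
   of the enumeration of P *)
Definition seq_vertex (sigma : {perm P}) (t : nat) : option P :=
  nth None [seq Some (sigma i) | i <- enum P] (t %% #|P|).

Fixpoint seq_run (sigma : {perm P}) (c0 : config) (t : nat) : config :=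
  match t with
  | 0 => c0
  | t'.+1 => let c := seq_run sigma c0 t' in
             match seq_vertex sigma t' with
             | Some u => update c u
             | None => c
             end
  end.

Definition is_fixed_point (c : config) : Prop := forall u, local_rule c u = c u.

Definition init_config (x : P -> W) : config := fun u => ([set x u], x u).

End Model.

From HB Require Import structures.
From mathcomp Require Import all_boot all_order all_fingroup.
From mathcomp Require Import zify.
Set Implicit Arguments. Unset Strict Implicit. Unset Printing Implicit Defensive.
Import Order.TTheory.

(* Let [k <= min n p] be the number of initial words.  Memories stay inside the initial
   words and every update either adds a new word to the memory or collapses it, so every
   vertex collapses within any [k * n] consecutive steps.  Let [m] be the least word still
   conveyed.  A collapse adopts the least word heard, so two adjacent vertices both
   conveying [m] keep it forever.  If no such pair forms within [k * n] steps, the collapse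
   of each vertex erases [m]; this can happen at most [k] times.  From such a pair, [m]
   spreads through the connected graph by one vertex every [k * n] steps, and once every
   vertex conveys [m], one more round turns every state into [({m}, m)], a fixed point.
   In total [k * k * n + (n - 1) * k * n + n <= 3 * n ^ 2 * p] steps suffice. *)

Lemma interval_ind (Q : nat -> Prop) a b : a <= b -> Q a ->
  (forall s, a <= s < b -> Q s -> Q s.+1) -> Q b.
Proof.
move=> /subnK <-; elim: (b - a) => [|j IH] // Qa step.
rewrite addSn; apply: (step); first by lia.
by apply: IH => // s hs; apply: step; lia.
Qed.

Lemma increasing_chain_full (T : finType) (A : nat -> {set T}) :
  A 0 != set0 -> (forall j, A j \subset A j.+1) ->
  (forall j, A j != setT -> #|A j| < #|A j.+1|) -> A #|T|.-1 = setT.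
Proof.
move=> A0 sub grow.
have lb j : minn j.+1 #|T| <= #|A j|.
  elim: j => [|j IH]; first by move: A0; rewrite -card_gt0; lia.
  have [full|notfull] := eqVneq (A j) setT.
    have := subset_leq_card (sub j); rewrite full cardsT; lia.
  have := grow j notfull; lia.
have T0 : 0 < #|T| by apply: leq_trans (max_card (A 0)); rewrite card_gt0.
apply/eqP; rewrite eqEcard subsetT cardsT /=.
by have := lb #|T|.-1; rewrite prednK // minnn.
Qed.

Section SetMin.
Variables (d : Order.disp_t) (W : finOrderType d).

Lemma foldr_min_mem (h : W) (s : seq W) : foldr Order.min h s \in h :: s.
Proof.
elim: s => [|a s IH] /=; first by rewrite inE.
rewrite minEle; case: ifP => _; first by rewrite !inE eqxx orbT.
by move: IH; rewrite !inE => /orP[->|->]; rewrite ?orbT.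
Qed.

Lemma foldr_min_le (h : W) (s : seq W) y :
  y \in h :: s -> (foldr Order.min h s <= y)%O.
Proof.
elim: s y => [|a s IH] y /=; first by rewrite inE => /eqP ->.
rewrite ge_min !inE => /or3P[/eqP->|/eqP->|yin].
- by apply/orP; right; apply: IH; rewrite inE eqxx.
- by rewrite lexx.
- by apply/orP; right; apply: IH; rewrite inE yin orbT.
Qed.

Lemma set_min_mem (dflt : W) (B : {set W}) : B != set0 -> set_min dflt B \in B.
Proof.
rewrite /set_min => /set0Pn [y yB].
have: y \in enum B by rewrite mem_enum.
case E: (enum B) => [|h t] // _.
by rewrite -mem_enum E foldr_min_mem.
Qed.

Lemma set_min_le (dflt : W) (B : {set W}) y : y \in B -> (set_min dflt B <= y)%O.
Proof. by rewrite /set_min -mem_enum; case: (enum B) => [|h t] //; apply: foldr_min_le. Qed.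

End SetMin.

Section LocalRule.
Variables (d : Order.disp_t) (W : finOrderType d) (P : finType) (e : rel P).
Implicit Types (c : config W P) (u v w : P).

Lemma local_rule_add c u : Nset e c u != set0 ->
  local_rule e c u = ((c u).1 :|: Nset e c u, (c u).2).
Proof. by rewrite /local_rule => ->. Qed.

Lemma local_rule_collapse c u : Nset e c u = set0 ->
  local_rule e c u = ([set set_min (c u).2 (Bset e c u)], set_min (c u).2 (Bset e c u)).
Proof. by rewrite /local_rule => ->; rewrite eqxx. Qed.

Lemma Nset_neighbour c u a : a \in Nset e c u ->
  exists v, [/\ e u v, (c v).2 = a & a \notin (c u).1].
Proof. by rewrite inE => /existsP[v /and3P[? /eqP ? ?]]; exists v. Qed.

Lemma Bset_neighbour c u a : a \in Bset e c u -> exists2 v, e u v & (c v).2 = a.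
Proof. by rewrite inE => /existsP[v /and3P[? /eqP ? _]]; exists v. Qed.

Lemma neighbour_word_in_Bset c u v : Nset e c u = set0 -> e u v -> (c v).2 \in Bset e c u.
Proof.
move=> N0 euv; have : (c v).2 \notin Nset e c u by rewrite N0 inE.
rewrite !inE => /existsPn /(_ v); rewrite euv eqxx /= negbK => mem_v.
by apply/existsP; exists v; rewrite euv eqxx mem_v.
Qed.

(* Every neighbour's word is in [B_u] once [N_u] is empty, so the collapse adopts the least
   word heard from a neighbour. *)
Lemma collapse_word c u v0 : Nset e c u = set0 -> e u v0 ->
  exists v, [/\ e u v, (local_rule e c u).2 = (c v).2
              & forall w, e u w -> ((c v).2 <= (c w).2)%O].
Proof.
move=> N0 euv0; rewrite local_rule_collapse //=.
have /set_min_mem : Bset e c u != set0.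
  by apply/set0Pn; exists (c v0).2; exact: neighbour_word_in_Bset.
move=> /(_ (c u).2) /Bset_neighbour[v euv word_v].
by exists v; split=> // w euw; rewrite word_v; apply/set_min_le/neighbour_word_in_Bset.
Qed.

Lemma local_rule_word c u v0 : e u v0 ->
  (local_rule e c u).2 = (c u).2 \/ exists2 v, e u v & (local_rule e c u).2 = (c v).2.
Proof.
move=> euv0; have [N0|NN] := eqVneq (Nset e c u) set0; last by left; rewrite local_rule_add.
by have [v [euv -> _]] := collapse_word N0 euv0; right; exists v.
Qed.

Lemma local_rule_word_in_memory c u :
  (c u).2 \in (c u).1 -> (local_rule e c u).2 \in (local_rule e c u).1.
Proof.
have [N0|NN] := eqVneq (Nset e c u) set0; first by rewrite local_rule_collapse //= set11.
by rewrite local_rule_add //= inE => ->.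
Qed.

Lemma local_rule_memory_sub c u v0 (A : {set W}) : e u v0 ->
  (c u).1 \subset A -> (forall v, (c v).2 \in A) -> (local_rule e c u).1 \subset A.
Proof.
move=> euv0 memA wordA; have [N0|NN] := eqVneq (Nset e c u) set0.
  have := local_rule_word c euv0; rewrite local_rule_collapse //= sub1set.
  by case=> [->|[v _ ->]].
rewrite local_rule_add //= subUset memA /=.
by apply/subsetP => a /Nset_neighbour[v [_ <- _]].
Qed.

Lemma local_rule_memory_grows c u : Nset e c u != set0 -> (c u).1 \proper (local_rule e c u).1.
Proof.
move=> NN; rewrite local_rule_add //=; have /set0Pn[a aN] := NN.
have [_ [_ _ a_new]] := Nset_neighbour aN.
apply/properP; split; first exact: subsetUl.
by exists a => //; rewrite inE aN orbT.
Qed.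

Lemma local_rule_constant c u v0 m : e u v0 ->
  (forall v, (c v).2 = m) -> m \in (c u).1 -> local_rule e c u = ([set m], m).
Proof.
move=> euv0 all_m m_mem.
have N0 : Nset e c u = set0.
  by apply/setP => a; rewrite in_set0; apply/negP => /Nset_neighbour[v [_ <-]]; rewrite all_m m_mem.
have [v [_ word_v _]] := collapse_word N0 euv0.
by move: word_v; rewrite local_rule_collapse //= !all_m => ->.
Qed.

End LocalRule.

Section Graph.
Variables (T : finType) (e : rel T).
Hypothesis e_connected : forall u v, connect e u v.

Lemma edge_leaving (A : {set T}) a0 b0 : a0 \in A -> b0 \notin A ->
  exists a b, [/\ a \in A, b \notin A & e a b].
Proof.
move=> a0A; have /connectP[p pp ->] := e_connected a0 b0.
elim: p a0 a0A pp => [|y p IH] a0 a0A /=; first by rewrite a0A.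
case/andP=> ea0y pp bA; case yA: (y \in A); first exact: IH yA pp bA.
by exists a0, y; rewrite yA.
Qed.

Lemma exists_neighbour : 1 < #|T| -> forall u, exists v, e u v.
Proof.
move=> /card_gt1P[y1 [y2 [_ _ y12]]] u.
have [w wu] : exists w, w \notin [set u].
  by case: (eqVneq y1 u) => [eq1|]; [exists y2; rewrite inE -eq1 eq_sym | exists y1; rewrite inE].
have [a [b [/set1P -> _ eub]]] := edge_leaving (set11 u) wu.
by exists b.
Qed.

End Graph.

Lemma seq_vertex_window (P : finType) (sigma : {perm P}) t u : 0 < #|P| ->
  exists s, t <= s < t + #|P| /\ seq_vertex sigma s = Some u.
Proof.
move=> P0; set n := #|P|; set i := enum_rank ((sigma^-1)%g u).
exists ((t %/ n + (i < t %% n)) * n + i); split.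
  have : i < n := ltn_ord i; have := divn_eq t n; have : t %% n < n by rewrite ltn_mod.
  by move: (t %/ n) (t %% n) (nat_of_ord i) => q r j; case: ltnP => /=; lia.
rewrite /seq_vertex modnMDl modn_small // (nth_map u); last by rewrite -cardE.
by rewrite nth_enum_rank permKV.
Qed.

Section Run.
Variables (d : Order.disp_t) (W : finOrderType d) (P : finType) (e : rel P)
  (sigma : {perm P}) (x : P -> W).
Hypotheses (P_gt1 : 1 < #|P|) (e_sym : symmetric e) (e_irr : irreflexive e)
  (e_connected : forall u v, connect e u v).

Local Notation n := #|P|.
Local Notation c t := (seq_run e sigma (init_config x) t).
Local Notation word t u := (c t u).2.
Local Notation memory t u := (c t u).1.

Let has_neighbour u : exists v, e u v := exists_neighbour e_connected P_gt1 u.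

Let window t u : exists s, t <= s < t + n /\ seq_vertex sigma s = Some u.
Proof. by apply: seq_vertex_window; apply: ltnW. Qed.

Lemma seq_runS_self t u : seq_vertex sigma t = Some u -> c t.+1 u = local_rule e (c t) u.
Proof. by move=> /= ->; rewrite /update eqxx. Qed.

Lemma seq_runS_other t u w : seq_vertex sigma t = Some u -> w != u -> c t.+1 w = c t w.
Proof. by move=> /= ->; rewrite /update => /negbTE ->. Qed.

Lemma seq_runSP t w : c t.+1 w = c t w \/
  seq_vertex sigma t = Some w /\ c t.+1 w = local_rule e (c t) w.
Proof.
case st: (seq_vertex sigma t) => [u|]; last by left; rewrite /= st.
have [->|wu] := eqVneq w u; first by right; rewrite (seq_runS_self st).
by left; apply: seq_runS_other st wu.
Qed.

Definition words t := [set word t u | u in P].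

Local Notation k := #|words 0|.

Lemma word_in_words t u : word t u \in words t.
Proof. exact: imset_f. Qed.

Lemma wordS t w : word t.+1 w = word t w \/ exists2 v, e w v & word t.+1 w = word t v.
Proof.
have [v0 ewv0] := has_neighbour w.
by case: (seq_runSP t w) => [->|[_ ->]]; [left | apply: local_rule_word ewv0].
Qed.

Lemma words_shrink t t' : t <= t' -> words t' \subset words t.
Proof.
move=> le_tt'.
apply: (interval_ind (Q := fun s => words s \subset words t)) le_tt' (subxx _) _ => s _ sub.
apply: subset_trans sub; apply/subsetP => _ /imsetP[u _ ->].
by case: (wordS s u) => [->|[v _ ->]]; apply: word_in_words.
Qed.

Lemma memory_invariant t u : word t u \in memory t u /\ memory t u \subset words 0.
Proof.
elim: t u => [|t IH] u; first by rewrite /= set11 sub1set (word_in_words 0 u).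
case: (seq_runSP t u) => [->|[_ ->]]; first exact: IH.
have [v0 euv0] := has_neighbour u; have [word_mem mem_sub] := IH u.
split; first exact: local_rule_word_in_memory.
apply: local_rule_memory_sub euv0 mem_sub _ => v.
exact: subsetP (words_shrink (leq0n t)) _ (word_in_words t v).
Qed.

Lemma card_memory t u : 0 < #|memory t u| <= k.
Proof.
have [word_mem mem_sub] := memory_invariant t u.
by rewrite (subset_leq_card mem_sub) andbT; apply/card_gt0P; exists (word t u).
Qed.

Definition additions_only u a b := forall s, a <= s < b ->
  seq_vertex sigma s = Some u -> Nset e (c s) u != set0.

Lemma memory_mono u a b : additions_only u a b -> a <= b -> memory a u \subset memory b u.
Proof.
move=> adds le_ab.
apply: (interval_ind (Q := fun s => memory a u \subset memory s u)) le_ab (subxx _) _ => s hs sub.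
apply: subset_trans sub _; case: (seq_runSP s u) => [->|[su ->]]; first exact: subxx.
exact/proper_sub/local_rule_memory_grows/adds.
Qed.

Lemma memory_grows_window u t : additions_only u t (t + n) -> #|memory t u| < #|memory (t + n) u|.
Proof.
move=> adds; have [s [/andP[ts st] su]] := window t u.
have sub1 : memory t u \subset memory s u by apply: memory_mono ts => r hr; apply: adds; lia.
have sub2 : memory s.+1 u \subset memory (t + n) u.
  by apply: memory_mono st => r hr; apply: adds; lia.
have grow : memory s u \proper memory s.+1 u.
  by rewrite (seq_runS_self su); apply/local_rule_memory_grows/adds => //; lia.
apply: leq_trans (subset_leq_card sub2); apply: leq_trans (proper_card grow).
by rewrite ltnS subset_leq_card.
Qed.

Lemma collapse_within t u : exists s,
  [/\ t <= s < t + k * n, seq_vertex sigma s = Some u & Nset e (c s) u = set0].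
Proof.
have [/existsP[s /andP[/eqP su /eqP N0]]|] :=
  boolP [exists s : 'I_(k * n),
           (seq_vertex sigma (t + s) == Some u) && (Nset e (c (t + s)) u == set0)].
  by exists (t + s); split=> //; rewrite leq_addr ltn_add2l ltn_ord.
move=> /existsPn no_collapse.
have adds : additions_only u t (t + k * n).
  move=> s hs su; have s_lt : s - t < k * n by lia.
  by have := no_collapse (Ordinal s_lt); rewrite /= subnKC ?su ?eqxx //; case/andP: hs.
have grow j : j <= k -> j + #|memory t u| <= #|memory (t + j * n) u|.
  elim: j => [|j IH] le_jk; first by rewrite addn0.
  have adds_j : additions_only u (t + j * n) (t + j * n + n).
    move=> s hs; apply: adds; have := leq_mul le_jk (leqnn n); rewrite mulSnr; lia.
  have := memory_grows_window adds_j; rewrite -addnA -mulSnr.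
  have := IH (ltnW le_jk); lia.
by have := grow k (leqnn k); have := card_memory t u; have := card_memory (t + k * n) u; lia.
Qed.

Definition word_lb t m := forall u, (m <= word t u)%O.

Lemma word_lb_mono t t' m : word_lb t m -> t <= t' -> word_lb t' m.
Proof.
move=> lb le_tt' u; have := subsetP (words_shrink le_tt') _ (word_in_words t' u).
by case/imsetP => v _ ->.
Qed.

Definition solid t m u := (word t u == m) && [exists v, e u v && (word t v == m)].

(* A collapse adopts the least neighbouring word, which cannot undercut the global minimum. *)
Lemma collapse_to_min t m u v : word_lb t m ->
  Nset e (c t) u = set0 -> e u v -> word t v = m -> (local_rule e (c t) u).2 = m.
Proof.
move=> lb N0 euv wv; have [v' [_ -> min_v']] := collapse_word N0 euv.
by apply: le_anti; rewrite lb -wv min_v'.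
Qed.

Lemma min_word_kept t m u v : word_lb t m ->
  word t u = m -> e u v -> word t v = m -> word t.+1 u = m.
Proof.
move=> lb wu euv wv; case: (seq_runSP t u) => [->|[_ ->]] //.
have [N0|NN] := eqVneq (Nset e (c t) u) set0; last by rewrite local_rule_add.
exact: collapse_to_min N0 euv wv.
Qed.

Lemma solidS t m u : word_lb t m -> solid t m u -> solid t.+1 m u.
Proof.
move=> lb /andP[/eqP wu /existsP[v /andP[euv /eqP wv]]].
rewrite /solid (min_word_kept lb wu euv wv) eqxx; apply/existsP; exists v.
by rewrite euv (min_word_kept lb wv _ wu) ?eqxx // e_sym.
Qed.

Lemma solid_mono t t' m u : word_lb t m -> solid t m u -> t <= t' -> solid t' m u.
Proof.
move=> lb sol le_tt'; apply: (interval_ind (Q := fun s => solid s m u)) le_tt' sol _.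
by move=> s /andP[ts _]; apply/solidS/(word_lb_mono lb).
Qed.

Lemma solid_spread t m v w : word_lb t m -> solid t m v -> e w v -> solid (t + k * n) m w.
Proof.
move=> lb sol_v ewv; have [s [/andP[ts st] sw N0]] := collapse_within t w.
have /andP[/eqP wv _] := solid_mono lb sol_v ts.
have /andP[/eqP wv' _] := solid_mono lb sol_v (leqW ts).
have wws : word s.+1 w = m.
  by rewrite (seq_runS_self sw); apply: collapse_to_min (word_lb_mono lb ts) N0 ewv wv.
apply: solid_mono (word_lb_mono lb (leqW ts)) _ st.
by rewrite /solid wws eqxx; apply/existsP; exists v; rewrite ewv wv' eqxx.
Qed.

Lemma all_solid t m v0 : word_lb t m -> solid t m v0 ->
  forall u, solid (t + n.-1 * (k * n)) m u.
Proof.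
move=> lb sol0; pose A j := [set u | solid (t + j * (k * n)) m u].
have lb_j j : word_lb (t + j * (k * n)) m by apply: word_lb_mono lb (leq_addr _ _).
have sub j : A j \subset A j.+1.
  by apply/subsetP => u; rewrite !inE => sol; apply: solid_mono (lb_j j) sol _; rewrite mulSnr; lia.
have full : A n.-1 = setT.
  apply: increasing_chain_full (sub) _ => [|j]; first by apply/set0Pn; exists v0; rewrite inE addn0.
  rewrite -properT => /properP[_ [b _ bA]].
  have v0A : v0 \in A j by rewrite inE; apply: solid_mono lb sol0 (leq_addr _ _).
  have [a [b' [aA b'A eab']]] := edge_leaving e_connected v0A bA.
  have b'A' : b' \in A j.+1.
    move: aA; rewrite !inE mulSnr addnA => aA.
    by apply: (solid_spread (lb_j j) aA); rewrite e_sym.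
  by apply: proper_card; apply/properP; split; [exact: sub | exists b'].
by move=> u; have := in_setT u; rewrite -full inE.
Qed.

Lemma collapse_to_solid s u m : seq_vertex sigma s = Some u -> Nset e (c s) u = set0 ->
  word s.+1 u = m -> solid s.+1 m u.
Proof.
move=> su N0 wu; have [v0 euv0] := has_neighbour u.
have [v [euv new_u _]] := collapse_word N0 euv0.
have vu : v != u by apply: contraTneq euv => ->; rewrite e_irr.
rewrite /solid wu eqxx; apply/existsP; exists v.
by rewrite euv (seq_runS_other su vu) -new_u -(seq_runS_self su) wu eqxx.
Qed.

Lemma new_word_solid s w m : word s.+1 w = m -> word s w != m -> exists u, solid s.+1 m u.
Proof.
move=> wm; case: (seq_runSP s w) => [same|[sw new]]; first by rewrite -wm same eqxx.
have [N0|NN] := eqVneq (Nset e (c s) w) set0; first by exists w; apply: collapse_to_solid.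
by rewrite -wm new local_rule_add // eqxx.
Qed.

(* Without a solid vertex the word [m] can only be lost, and the collapse every vertex
   undergoes within [k * n] steps removes it. *)
Lemma min_word_vanishes t m : (forall s, t <= s <= t + k * n -> forall u, ~~ solid s m u) ->
  forall u, word (t + k * n) u != m.
Proof.
move=> no_solid u; have [s [/andP[ts st] su N0]] := collapse_within t u.
have not_m : word s.+1 u != m.
  apply/eqP => wm; have : t <= s.+1 <= t + k * n by lia.
  by move/no_solid/(_ u); rewrite (collapse_to_solid su N0 wm).
apply: (interval_ind (Q := fun r => word r u != m)) st not_m _ => r /andP[sr rt] wr.
apply/eqP => wm; have [v sol] := new_word_solid wm wr.
have : t <= r.+1 <= t + k * n by lia.
by move/no_solid/(_ v); rewrite sol.
Qed.

Let some_vertex : P := enum_default (Ordinal (ltnW P_gt1)).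

Lemma solid_appears j t : #|words t| <= j ->
  exists T m u, [/\ T <= t + j * (k * n), word_lb T m & solid T m u].
Proof.
have w0 := word_in_words t some_vertex.
elim: j t w0 => [|j IH] t w0 card_t.
  by move: card_t; rewrite leqn0 cards_eq0 => /eqP words0; rewrite words0 inE in w0.
set m := set_min (word t some_vertex) (words t).
have m_in : m \in words t by apply/set_min_mem/set0Pn; exists (word t some_vertex).
have lb : word_lb t m by move=> u; apply/set_min_le/word_in_words.
have [/existsP[s /existsP[u sol]]|/existsPn no_solid] :=
  boolP [exists s : 'I_(k * n).+1, [exists u, solid (t + s) m u]].
  exists (t + s), m, u; split=> //; last exact: word_lb_mono lb (leq_addr _ _).
  by have := ltn_ord s; rewrite mulSnr; lia.
have vanished : forall u, word (t + k * n) u != m.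
  apply: min_word_vanishes => s ts; have s_lt : s - t < (k * n).+1 by lia.
  by move: (no_solid (Ordinal s_lt)) => /existsPn; rewrite /= subnKC //; case/andP: ts.
have shrink : #|words (t + k * n)| < #|words t|.
  apply: proper_card; apply/properP; split; first exact/words_shrink/leq_addr.
  by exists m => //; apply/imsetP => -[u _ wu]; move: (vanished u); rewrite -wu eqxx.
have [|T [m' [u [le_T lbT solT]]]] := IH (t + k * n) (word_in_words _ some_vertex); first lia.
by exists T, m', u; split=> //; rewrite mulSnr; lia.
Qed.

Lemma settle t m : (forall r v, t <= r -> word r v = m) ->
  forall u, c (t + n) u = ([set m], m).
Proof.
move=> all_m u; have [s [/andP[ts st] su]] := window t u.
have [v0 euv0] := has_neighbour u.
have cu : c s.+1 u = ([set m], m).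
  rewrite (seq_runS_self su); apply: local_rule_constant euv0 _ _ => [v|]; first exact: all_m.
  by have [wmem _] := memory_invariant s u; rewrite -(all_m s u ts).
apply: (interval_ind (Q := fun r => c r u = ([set m], m))) st cu _ => r /andP[sr _] cr.
case: (seq_runSP r u) => [->|[_ ->]] //.
by apply: local_rule_constant euv0 _ _ => [v|]; [apply: all_m; lia | rewrite cr set11].
Qed.

Lemma reaches_fixed_point : exists t, t <= 3 * n ^ 2 * #|W| /\ is_fixed_point e (c t).
Proof.
have [T [m [u [le_T lb sol]]]] := solid_appears (leqnn k).
set T1 := T + n.-1 * (k * n).
have all_m r v : T1 <= r -> word r v = m.
  move=> le_r; have lb1 := word_lb_mono lb (leq_addr (n.-1 * (k * n)) T).
  by have /andP[/eqP] := solid_mono lb1 (all_solid lb sol v) le_r.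
exists (T1 + n); split.
  have k_le_n : k <= n by apply: leq_imset_card.
  have k_le_W : k <= #|W| := max_card _.
  have W0 : 0 < #|W| by apply/card_gt0P; exists m.
  have h1 : k * (k * n) <= n * (#|W| * n) := leq_mul k_le_n (leq_mul k_le_W (leqnn n)).
  have h2 : n.-1 * (k * n) <= n * (#|W| * n) := leq_mul (leq_pred n) (leq_mul k_le_W (leqnn n)).
  have h3 : n <= n * (#|W| * n) by rewrite leq_pmulr // muln_gt0 W0; lia.
  rewrite /T1 add0n in le_T *; lia.
move=> w; have [v0 ewv0] := has_neighbour w; have settled := settle all_m.
by rewrite settled; apply: local_rule_constant ewv0 _ _ => [v|]; rewrite settled ?set11.
Qed.

End Run.

Theorem theorem1 :
  exists C : nat,
  forall (n : nat) (e : rel 'I_n),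
    2 <= n -> symmetric e -> irreflexive e -> (forall u v, connect e u v) ->
  forall (d : Order.disp_t) (W : finOrderType d) (x : 'I_n -> W)
         (sigma : {perm 'I_n}),
  exists t, t <= C * n ^ 2 * #|W| /\
    is_fixed_point e (seq_run e sigma (init_config x) t).
Proof.
exists 3 => n e n_ge2 e_sym e_irr e_connected d W x sigma.
have n_gt1 : 1 < #|'I_n| by rewrite card_ord.
by have := reaches_fixed_point sigma x n_gt1 e_sym e_irr e_connected; rewrite card_ord.
Qed.
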